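(* Let $X$ be a finite $T_0$ space and $\mathbb{B}(X)=\{U_x\mid x\in X\}$. If $\mathcal{U}\in Cov(X)$ satisfies $\mathcal{U}\ge_C\mathbb{B}(X)$, then $\mathcal{U}$ and $\mathbb{B}(X)$, regarded as finite $T_0$ spaces (posets under inclusion), are homotopy equivalent.
   Context: For a finite topological space $X$ and $x\in X$, $U_x$ is the intersection of all open sets containing $x$. Finite $T_0$ spaces are identified with finite posets (via $x\le y$ iff $U_x\subseteq U_y$; open sets are down-sets), continuous maps with order-preserving maps. Any finite family of sets ordered by inclusion is regarded as a finite poset, hence a finite $T_0$ space. An open cover $\mathcal{U}$ of $X$ is basis-like if whenever $x\in U\cap V$ with $U,V\in\mathcal{U}$ there is $W\in\mathcal{U}$ with $x\in W\subseteq U\cap V$. For a finite $T_0$ space $X$, $Cov(X)$ is the set of all finite basis-like open covers of $X$. For $\mathcal{U},\mathcal{V}\in Cov(X)$ we write $\mathcal{U}\ge_C\mathcal{V}$ iff $\mathcal{U}$ refines $\mathcal{V}$ and there exists a continuous (i.e. inclusion-order-preserving) map $p_{\mathcal{V},\mathcal{U}}:\mathcal{U}\to\mathcal{V}$ with $U\subseteq p_{\mathcal{V},\mathcal{U}}(U)$ for every $U\in\mathcal{U}$. *)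

From HB Require Import structures.
From mathcomp Require Import all_boot all_order all_algebra.
From mathcomp Require Import all_classical all_reals topology normedtype.
Set Implicit Arguments. Unset Strict Implicit. Unset Printing Implicit Defensive.
Import Order.TTheory GRing.Theory Num.Theory.
Import numFieldNormedType.Exports.
Local Open Scope classical_set_scope.

Definition alex (T : choiceType) (le : rel T) : Type := T.
Section Alex.
Variables (T : choiceType) (le : rel T).
HB.instance Definition _ := Choice.on (alex le).
Definition alex_open : set_system (alex le) :=
  fun D => forall x y : T, le x y -> D y -> D x.
Lemma alex_openT : alex_open setT. Proof. by []. Qed.
Lemma alex_openI : setI_closed alex_open.
Proof. by move=> A B hA hB x y lexy [/hA Ay /hB By]; split; [exact: Ay|exact: By]. Qed.
Lemma alex_open_bigU (I : Type) (f : I -> set (alex le)) :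
  (forall i, alex_open (f i)) -> alex_open (\bigcup_i f i).
Proof. by move=> hf x y lexy [i _ /hf fi]; exists i => //; exact: fi. Qed.
HB.instance Definition _ := isOpenTopological.Build (alex le)
  alex_openT alex_openI alex_open_bigU.
End Alex.

Local Open Scope ring_scope.

Definition homotopic (R : realType) (X Y : topologicalType) (f g : X -> Y) : Prop :=
  exists H : (X * subspace (`[0, 1]%classic : set R))%type -> Y,
    [/\ continuous H, (forall x : X, H (x, 0) = f x) & (forall x : X, H (x, 1) = g x)].

Definition homotopy_equivalent (R : realType) (X Y : topologicalType) : Prop :=
  exists (f : X -> Y) (g : Y -> X),
    [/\ continuous f, continuous g,
        homotopic R (g \o f) idfun & homotopic R (f \o g) idfun].

Local Close Scope ring_scope.
Local Open Scope order_scope.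

Section FiniteSpaces.
Context {d : Order.disp_t} {T : finPOrderType d}.


Definition is_open (D : {set T}) : Prop :=
  forall x y : T, x <= y -> y \in D -> x \in D.

(* X is the finite poset T (finite T0 space); its open sets are the down-sets *)
Definition minimal_open (x : T) : {set T} := [set y | y <= x].

Definition basis_B : {set {set T}} := [set minimal_open x | x : T].

Definition member (U : {set {set T}}) := {A : {set T} | A \in U}.
Definition fam_space (U : {set {set T}}) :=
  alex (fun A B : member U => val A \subset val B).

Definition open_cover (U : {set {set T}}) : Prop :=
  (forall A, A \in U -> is_open A) /\ (forall x, exists2 A, A \in U & x \in A).

Definition basis_like (U : {set {set T}}) : Prop :=
  forall A B x, A \in U -> B \in U -> x \in A :&: B ->
    exists2 W, W \in U & (x \in W) && (W \subset A :&: B).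

Definition in_Cov (U : {set {set T}}) : Prop := open_cover U /\ basis_like U.

Definition refines (U V : {set {set T}}) : Prop :=
  forall A, A \in U -> exists2 B, B \in V & A \subset B.

Definition geC (U V : {set {set T}}) : Prop :=
  refines U V /\
  exists p : member U -> member V,
    (forall A B : member U, val A \subset val B -> val (p A) \subset val (p B)) /\
    (forall A : member U, val A \subset val (p A)).

End FiniteSpaces.

From HB Require Import structures.
From mathcomp Require Import all_boot all_order all_algebra.
From mathcomp Require Import all_classical all_reals topology normedtype.
Import Order.TTheory GRing.Theory Num.Theory.
Import numFieldNormedType.Exports.

(* Send U_x to the least member of U containing x, which exists
   because U is basis-like (the member of least cardinality containing x lies
   inside every other one). This map g and the given p are order-preserving,
   and both composites are pointwise above the identity. In a finite space two
   comparable maps are homotopic, by the homotopy that equals the larger map at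
   time 0 and the smaller one afterwards. *)

Local Open Scope classical_set_scope.
Local Open Scope ring_scope.

Lemma monotone_continuous (T1 T2 : choiceType) (le1 : rel T1) (le2 : rel T2)
    (f : alex le1 -> alex le2) :
  (forall x y, le1 x y -> le2 (f x) (f y)) -> continuous f.
Proof.
move=> f_mono; apply/continuousP => D /= D_open.
change (@alex_open _ le1 (f @^-1` D)) => x y le_xy /= Dfy.
exact: (D_open _ _ (f_mono _ _ le_xy) Dfy).
Qed.

Lemma homotopic_of_le (R : realType) (X : topologicalType) (T : choiceType)
    (le : rel T) (f g : X -> alex le) :
  continuous f -> continuous g -> (forall x, le (g x) (f x)) -> homotopic R f g.
Proof.
move=> f_cont g_cont le_gf.
set I := subspace (`[0, 1]%classic : set R).
pose H (z : (X * I)%type) := if 0 < z.2 then g z.1 else f z.1.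
exists H; split; [|by move=> x; rewrite /H ltxx|by move=> x; rewrite /H ltr01].
have fst_cont : continuous (fun z : (X * I)%type => z.1) by move=> z; exact: cvg_fst.
have snd_cont : continuous (fun z : (X * I)%type => z.2) by move=> z; exact: cvg_snd.
apply/continuousP => D D_open.
(* D is a down-set, so f z.1 \in D already forces g z.1 \in D *)
have -> : H @^-1` D = (g \o fst) @^-1` D `&` snd @^-1` [set t : R | 0 < t]
                       `|` (f \o fst) @^-1` D.
  apply/seteqP; split => -[x t]; rewrite /H /=.
    by case: ifP => t_gt0 Dx; [left|right].
  case=> [[Dgx ->] //|Dfx]; case: ifP => // _.
  exact: (D_open _ _ (le_gf x) Dfx).
apply: openU; last first.
  by move/continuousP: (fun z => continuous_comp (fst_cont z) (f_cont _)); apply.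
apply: openI.
  by move/continuousP: (fun z => continuous_comp (fst_cont z) (g_cont _)); apply.
by move/continuousP: snd_cont; apply; apply: open_subspaceW; exact: open_gt.
Qed.

Lemma homotopic_id_of_extensive (R : realType) (T : choiceType) (le : rel T)
    (f : alex le -> alex le) :
  (forall x y, le x y -> le (f x) (f y)) -> (forall x, le x (f x)) ->
  homotopic R f idfun.
Proof.
by move=> f_mono f_ext; apply: homotopic_of_le => //; apply: monotone_continuous.
Qed.

Local Close Scope ring_scope.
Local Open Scope order_scope.

Section LeastMember.
Context {d : Order.disp_t} {T : finPOrderType d} (U : {set {set T}}).

Lemma basis_like_least_member (x : T) :
  basis_like U -> (exists2 A, A \in U & x \in A) ->
  exists A, [/\ A \in U, x \in A & forall B, B \in U -> x \in B -> A \subset B].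
Proof.
move=> U_basis [A0 A0U xA0].
pose P A := (A \in U) && (x \in A).
have [A /andP[AU xA] A_min] := @arg_minnP _ A0 P (fun A => #|A|) (introT andP (conj A0U xA0)).
exists A; split => // B BU xB.
have xAB : x \in A :&: B by rewrite inE xA xB.
have [W WU /andP[xW sW_AB]] := U_basis A B x AU BU xAB.
have sWA : W \subset A := fintype.subset_trans sW_AB (subsetIl _ _).
have -> : A = W by apply/esym/eqP; rewrite eqEcard sWA A_min // /P WU xW.
exact: fintype.subset_trans sW_AB (subsetIr _ _).
Qed.

Definition least_superset (S : {set T}) (W : member U) : bool :=
  (S \subset val W) && [forall V : member U, (S \subset val V) ==> (val W \subset val V)].

Hypothesis U_cov : in_Cov U.

Lemma exists_least_superset (A : member basis_B) :
  exists W : member U, least_superset (val A) W.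
Proof.
case: U_cov => [[U_open U_covers] U_basis]; case: A => [A /= /imsetP[x _ ->]].
have [W [WU xW W_min]] := basis_like_least_member x U_basis (U_covers x).
exists (exist _ W WU); apply/andP; split.
  by apply/fintype.subsetP => y; rewrite inE => le_yx; exact: U_open le_yx xW.
apply/forallP => V; apply/implyP => sUV; apply: W_min; first exact: valP.
by apply: (fintype.subsetP sUV); rewrite inE.
Qed.

Definition least_cover_member (A : member basis_B) : member U :=
  xchoose (exists_least_superset A).

Lemma least_cover_member_sup (A : member basis_B) :
  val A \subset val (least_cover_member A).
Proof. by case/andP: (xchooseP (exists_least_superset A)). Qed.

Lemma least_cover_member_min (A : member basis_B) (V : member U) :
  val A \subset val V -> val (least_cover_member A) \subset val V.
Proof.
by case/andP: (xchooseP (exists_least_superset A)) => _ /forallP/(_ V)/implyP.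
Qed.

Lemma least_cover_member_mono (A B : member basis_B) :
  val A \subset val B -> val (least_cover_member A) \subset val (least_cover_member B).
Proof.
move=> sAB; apply: least_cover_member_min.
exact: fintype.subset_trans sAB (least_cover_member_sup B).
Qed.

End LeastMember.

Theorem proposition3p3 (R : realType) (d : Order.disp_t) (T : finPOrderType d)
  (U : {set {set T}}) :
  in_Cov U -> geC U (@basis_B d T) ->
  homotopy_equivalent R (fam_space U) (fam_space (@basis_B d T)).
Proof.
move=> U_cov [_ [p [p_mono p_sup]]].
pose g := least_cover_member U U_cov.
have g_mono := least_cover_member_mono U U_cov.
have g_sup := least_cover_member_sup U U_cov.
exists (p : fam_space U -> fam_space basis_B), (g : fam_space basis_B -> fam_space U).
split.
- exact: monotone_continuous.
- exact: monotone_continuous.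
- apply: homotopic_id_of_extensive => [A B sAB|A] /=.
    exact/g_mono/p_mono.
  exact: fintype.subset_trans (p_sup A) (g_sup _).
- apply: homotopic_id_of_extensive => [A B sAB|A] /=.
    exact/p_mono/g_mono.
  exact: fintype.subset_trans (g_sup A) (p_sup _).
Qed.
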